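(* Let $X$ be a rearrangement invariant space on $(0,\infty)$ with the Fatou property such that $L_\infty\hookrightarrow X$ and the Cesàro operator $C$ is bounded on $X$. Suppose also that $X$ satisfies: for every $f\in X$ and every measurable $A\subset(0,\infty)$ with $m(A)<\infty$, $f\chi_A\in X_a$. Then the Cesàro space $CX$ contains a lattice isometric copy of $\ell_\infty$.
   Context: A rearrangement invariant space on $(0,\infty)$ is a Banach space $X\subset L_0(0,\infty)$ with the ideal property ($|f|\le|g|$ a.e., $g\in X$ imply $f\in X$, $\|f\|_X\le\|g\|_X$), containing an a.e. positive function, in which equimeasurable functions have equal norms. Fatou property: $0\le f_n\uparrow f$ a.e., $\sup\|f_n\|_X<\infty$ imply $f\in X$ and $\|f_n\|_X\uparrow\|f\|_X$. $X_a$ is the ideal of order continuous elements ($f\in X_a$ iff $0\le f_n\le|f|$, $f_n\downarrow0$ a.e. imply $\|f_n\|_X\to0$). $m$ is Lebesgue measure. $C(f)(x)=\frac1x\int_0^x|f(t)|\,dt$; $CX=\{f: C(|f|)\in X\}$ with $\|f\|_{CX}=\|C(|f|)\|_X$. A lattice isometric copy of $\ell_\infty$ is the image of a linear isometric lattice-homomorphic embedding of $\ell_\infty$. *)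

(* functions on (0,oo) are modelled as R -> R,
   only their values on Dom = ]0,+oo[ matter; Lebesgue measure on R. *)
From HB Require Import structures.
From mathcomp Require Import all_boot all_order all_algebra.
From mathcomp Require Import all_classical all_reals all_analysis.
Set Implicit Arguments. Unset Strict Implicit. Unset Printing Implicit Defensive.
Import Order.TTheory GRing.Theory Num.Theory.
Import numFieldNormedType.Exports.
Local Open Scope classical_set_scope.
Local Open Scope ring_scope.

Definition Dom (R : realType) : set R := `]0, +oo[%classic.
Arguments Dom R : clear implicits.

Notation leb R := (@lebesgue_measure R).

Definition L0 (R : realType) : set (R -> R) :=
  [set f | measurable_fun (Dom R) f].
Arguments L0 R : clear implicits.

Definition distr_fun (R : realType) (f : R -> R) (l : R) : \bar R :=
  leb R [set x | Dom R x /\ l < `|f x|].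

Definition equimeasurable (R : realType) (f g : R -> R) : Prop :=
  forall l : R, 0 < l -> distr_fun f l = distr_fun g l.

(* X is a (real) Banach space of (a.e.-classes of) functions in L_0 with
   norm nX (meaningful on X only) *)
Definition banach_subspace_L0 (R : realType) (X : set (R -> R))
    (nX : (R -> R) -> R) : Prop :=
  X `<=` L0 R /\
      X (fun _ => 0)/\
      (forall f g, X f -> X g -> X (f \+ g))/\
      (forall (a : R) f, X f -> X (fun x => a * f x))/\
      (forall f, X f -> 0 <= nX f)/\
      (forall f, X f -> (nX f = 0 <-> ae_eq (leb R) (Dom R) f (fun _ => 0)))/\
      (forall (a : R) f, X f -> nX (fun x => a * f x) = `|a| * nX f)/\
      (forall f g, X f -> X g -> nX (f \+ g) <= nX f + nX g) /\
      (forall u : nat -> R -> R, (forall n, X (u n)) ->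
         (forall e : R, 0 < e -> exists N : nat, forall m n : nat,
             (N <= m)%N -> (N <= n)%N -> nX (u n \- u m) < e) ->
         exists2 f, X f & (fun n => nX (u n \- f)) @ \oo --> (0 : R)).

Definition ideal_property (R : realType) (X : set (R -> R))
    (nX : (R -> R) -> R) : Prop :=
  forall f g, L0 R f -> X g ->
    (\forall x \ae leb R, Dom R x -> `|f x| <= `|g x|) ->
    X f /\ nX f <= nX g.

Definition ri_space (R : realType) (X : set (R -> R))
    (nX : (R -> R) -> R) : Prop :=
  [/\ banach_subspace_L0 X nX,
      ideal_property X nX,
      (exists2 w, X w & \forall x \ae leb R, Dom R x -> 0 < w x) &
      (forall f g, X f -> L0 R g -> equimeasurable f g ->
         X g /\ nX g = nX f)].

Definition fatou_property (R : realType) (X : set (R -> R))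
    (nX : (R -> R) -> R) : Prop :=
  forall (fn : nat -> R -> R) (f : R -> R),
    (forall n, X (fn n)) -> L0 R f ->
    (\forall x \ae leb R, Dom R x ->
        (forall n, 0 <= fn n x <= fn n.+1 x) /\ (fn ^~ x @ \oo --> f x)) ->
    (exists M : R, forall n, nX (fn n) <= M) ->
    X f /\ (fun n => nX (fn n)) @ \oo --> nX f.

Definition Linfty_embeds (R : realType) (X : set (R -> R)) : Prop :=
  forall f, L0 R f ->
    (exists M : R, \forall x \ae leb R, Dom R x -> `|f x| <= M) -> X f.

Definition order_continuous (R : realType) (X : set (R -> R))
    (nX : (R -> R) -> R) (f : R -> R) : Prop :=
  X f /\
  forall fn : nat -> R -> R, (forall n, L0 R (fn n)) ->
    (\forall x \ae leb R, Dom R x ->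
        (forall n, 0 <= fn n x <= `|f x| /\ fn n.+1 x <= fn n x) /\
        (fn ^~ x @ \oo --> (0 : R))) ->
    (fun n => nX (fn n)) @ \oo --> (0 : R).

Definition loc_int_at0 (R : realType) (f : R -> R) : Prop :=
  forall x : R, 0 < x ->
    (\int[leb R]_(t in `]0%R, x%R]) (`|f t|)%:E < +oo)%E.

(* Cesaro operator  C(f)(x) = 1/x int_0^x |f t| dt
   (only meaningful when loc_int_at0 f holds) *)
Definition cesaro (R : realType) (f : R -> R) : R -> R :=
  fun x => x^-1 * fine (\int[leb R]_(t in `]0, x]) (`|f t|)%:E).

Definition CX (R : realType) (X : set (R -> R)) : set (R -> R) :=
  [set f | L0 R f /\ loc_int_at0 f /\ X (cesaro f)].

Definition nCX (R : realType) (nX : (R -> R) -> R) (f : R -> R) : R :=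
  nX (cesaro f).

Definition cesaro_bounded (R : realType) (X : set (R -> R))
    (nX : (R -> R) -> R) : Prop :=
  exists c : R, forall f, X f -> CX X f /\ nX (cesaro f) <= c * nX f.

Definition linfty (R : realType) : set (nat -> R) :=
  [set a | exists M : R, forall n, `|a n| <= M].

Definition linfty_norm (R : realType) (a : nat -> R) : R :=
  sup (range (fun n => `|a n|)).

Definition lattice_isometric_copy_linfty (R : realType) (Y : set (R -> R))
    (nY : (R -> R) -> R) : Prop :=
  exists T : (nat -> R) -> (R -> R),
    [/\ (forall a, linfty a -> Y (T a)),
        (forall a, linfty a -> nY (T a) = linfty_norm a),
        (forall (k : R) a b, linfty a -> linfty b ->
           ae_eq (leb R) (Dom R) (T (fun n => k * a n + b n))
                 (fun x => k * T a x + T b x)) &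
        (forall a b, linfty a -> linfty b ->
           ae_eq (leb R) (Dom R) (T (fun n => Num.max (a n) (b n)))
                 (fun x => Num.max (T a x) (T b x)))].

From Pilot Require Import Defs.
From mathcomp Require Import all_boot all_order all_algebra.
From mathcomp Require Import all_classical all_reals all_analysis.
From mathcomp Require Import measurable_realfun.
Set Implicit Arguments. Unset Strict Implicit. Unset Printing Implicit Defensive.
Import Order.TTheory GRing.Theory Num.Theory.
Import numFieldNormedType.Exports.
Local Open Scope classical_set_scope.
Local Open Scope ring_scope.

(* Cut (0, oo) into the blocks [j!, (j+1)!) and label block j by the 2-adic
   valuation of j + 1, so that every label is carried by blocks arbitrarily
   far out.  A bounded sequence a is sent to the step function T a equal to
   a_k / ||1||_X on the blocks labelled k.  Then
   0 <= C (T a) <= sup |a| / ||1||_X, whence ||T a||_CX <= ||a||_oo.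
   Conversely, block j is j + 1 times longer than everything before it, so on
   a far-out block labelled k the Cesaro mean of T a is at least
   (1 - 1/(n+1)) |a_k| / ||1||_X on an interval of length n + 1.  By
   rearrangement invariance the X-norm of the indicator of that interval is
   ||1_(0,n+1)||_X, which tends to ||1||_X by the Fatou property; hence
   ||T a||_CX >= |a_k|.  Linearity and the lattice property hold pointwise. *)

Section blocks.
Variable R : realType.

Definition block_lo (j : nat) : R := (j`!)%:R.

(* Points below 1 lie in no block [[j!, (j+1)![] and are sent to the (empty)
   block 0. *)
Definition block_of (x : R) : nat :=
  xget 0%N [set j | block_lo j <= x < block_lo j.+1].

Definition block_label (j : nat) : nat := logn 2 j.+1.

Lemma block_lo_ge1 j : 1 <= block_lo j.
Proof. by rewrite /block_lo ler1n fact_gt0. Qed.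

Lemma block_lo_le i j : (i <= j)%N -> block_lo i <= block_lo j.
Proof. by move=> ij; rewrite /block_lo ler_nat leq_fact. Qed.

Lemma block_lo_room (n j : nat) : (n.+1 + n.+1 <= j)%N ->
  n.+1%:R * block_lo j + n.+1%:R <= block_lo j.+1.
Proof.
move=> nj; rewrite /block_lo -natrM -natrD ler_nat factS.
apply: (@leq_trans ((n.+1 + n.+1) * j`!)); last by rewrite leq_mul2r ltnW ?orbT.
by rewrite mulnDl leq_add2l leq_pmulr ?fact_gt0.
Qed.

Lemma block_ofE x j : block_lo j <= x < block_lo j.+1 -> block_of x = j.
Proof.
move=> /andP[jx xj]; rewrite /block_of; case: xgetP => [i _ /andP[ix xi]|].
  case: (ltngtP i j) => // [ij|ji].
  - by have := @block_lo_le i.+1 j ij; rewrite leNgt (le_lt_trans jx xi).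
  - by have := @block_lo_le j.+1 i ji; rewrite leNgt (le_lt_trans ix xj).
by move=> /(_ j); rewrite /= jx xj.
Qed.

Lemma measurable_block_of j : measurable [set x | block_of x = j].
Proof.
pose blocks := \bigcup_i `[block_lo i, block_lo i.+1[%classic.
have -> : [set x | block_of x = j] = `[block_lo j, block_lo j.+1[%classic
    `|` (if j == 0%N then ~` blocks else set0).
  apply/seteqP; split => x /=.
  - move=> <-; have [[i _ xi]|xNblocks] := pselect (blocks x).
      by left; move: (xi); rewrite /= in_itv => /block_ofE ->.
    rewrite /block_of; case: xgetP => [i _ xi|_]; last by right.
    by case: xNblocks; exists i => //=; rewrite in_itv.
  - case=> [|]; first by rewrite /= in_itv => /block_ofE.
    case: eqP => // -> xNblocks; rewrite /block_of; case: xgetP => // i _ xi.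
    by case: xNblocks; exists i => //=; rewrite in_itv.
apply: measurableU; first exact: measurable_itv.
case: eqP => _; last exact: measurable0.
by apply/measurableC/bigcup_measurable => i _; exact: measurable_itv.
Qed.

Lemma measurable_comp_block_of (g : nat -> R) :
  measurable_fun setT (g \o block_of).
Proof.
move=> _ Y mY; rewrite setTI.
have -> : (g \o block_of) @^-1` Y =
    \bigcup_(j in g @^-1` Y) [set x | block_of x = j].
  by apply/seteqP; split => [x Yx|x [j Yj /= ->]] //; exists (block_of x).
by apply: bigcup_measurable => j _; exact: measurable_block_of.
Qed.

(* The witness is [j + 1 = 2 ^ k * (2 B + 1)]. *)
Lemma block_label_recurrent k B : exists2 j, (B <= j)%N & block_label j = k.
Proof.
have pos : (0 < 2 ^ k * B.*2.+1)%N by rewrite muln_gt0 expn_gt0.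
exists (2 ^ k * B.*2.+1).-1.
  rewrite -ltnS prednK // (@leq_trans B.*2.+1) ?leq_pmull ?expn_gt0 //.
  by rewrite ltnS -addnn leq_addr.
rewrite /block_label prednK // lognM ?expn_gt0 // pfactorK //.
by rewrite logn_coprime ?addn0 // coprime2n /= odd_double.
Qed.

End blocks.

Definition abs_primitive (R : realType) (f : R -> R) (x : R) : \bar R :=
  \int[leb R]_(t in `]0, x]) (`|f t|)%:E.

Lemma abs_primitive_ge0 (R : realType) (f : R -> R) x :
  (0 <= abs_primitive f x)%E.
Proof. by apply: integral_ge0 => t _; rewrite lee_fin. Qed.

Section cesaro_of_bounded.
Variables (R : realType) (f : R -> R) (B : R).
Hypotheses (mf : measurable_fun setT f) (fB : forall t, `|f t| <= B).

Lemma measurable_abs_EFin (D : set R) :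
  measurable_fun D (fun t => (`|f t|)%:E).
Proof.
apply/measurable_EFinP/measurableT_comp => //.
exact: measurable_funS mf.
Qed.

Lemma abs_primitive_le (x y : R) :
  x <= y -> (abs_primitive f x <= abs_primitive f y)%E.
Proof.
move=> xy; apply: ge0_subset_integral => //; try exact: measurable_itv.
- exact: measurable_abs_EFin.
- by move=> t /=; rewrite !in_itv /= => /andP[-> /le_trans]; apply.
Qed.

Lemma abs_primitive_le_bound (x : R) :
  0 < x -> (abs_primitive f x <= (B * x)%:E)%E.
Proof.
move=> x0; have B0 : 0 <= B by apply: le_trans (fB 0).
have : (\int[leb R]_(t in `]0%R, x]) `|(EFin \o f) t|
          <= B%:E * leb R `]0%R, x])%E.
  apply: integral_le_bound.
  - exact: measurable_itv.
  - by apply/measurable_EFinP; exact: measurable_funS mf.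
  - by rewrite lee_fin.
  - by apply: aeW => t _; rewrite lee_fin.
by rewrite lebesgue_measure_itv /= lte_fin x0 sube0 -EFinM.
Qed.

Lemma abs_primitive_fin_num x : abs_primitive f x \is a fin_num.
Proof.
rewrite ge0_fin_numE ?abs_primitive_ge0 //.
have x1 : x <= Num.max x 1 by rewrite le_max lexx.
apply: le_lt_trans (abs_primitive_le x1) _.
apply: le_lt_trans (abs_primitive_le_bound _) (ltry _).
by rewrite lt_max ltr01 orbT.
Qed.

Lemma loc_int_at0_bounded : loc_int_at0 f.
Proof.
move=> x _; have := abs_primitive_fin_num x.
by rewrite ge0_fin_numE ?abs_primitive_ge0.
Qed.

Lemma measurable_cesaro : L0 R (Defs.cesaro f).
Proof.
change (measurable_fun (Dom R) (GRing.inv \* (fine \o abs_primitive f))).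
apply: measurable_funM.
- apply: open_continuous_measurable_fun; first exact: interval_open.
  move=> x; rewrite inE /Dom /= in_itv /= andbT => x0.
  by apply: inv_continuous; rewrite gt_eqF.
- apply: nondecreasing_measurable; first exact: measurable_itv.
  move=> x y xy; apply: fine_le; rewrite ?abs_primitive_fin_num //.
  exact: abs_primitive_le.
Qed.

Lemma cesaro_ge0_le (x : R) : 0 < x -> 0 <= Defs.cesaro f x <= B.
Proof.
move=> x0; rewrite /Defs.cesaro; apply/andP; split.
  by rewrite mulr_ge0 ?invr_ge0 ?(ltW x0) ?fine_ge0 ?abs_primitive_ge0.
rewrite ler_pdivrMl // mulrC -lee_fin fineK ?abs_primitive_fin_num //.
exact: abs_primitive_le_bound.
Qed.

End cesaro_of_bounded.

Section block_step.
Variables (R : realType) (N : R) (a : nat -> R) (S : R).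
Hypotheses (N0 : 0 < N) (aS : forall k, `|a k| <= S).

Definition block_step (x : R) : R := a (block_label (block_of x)) / N.

Lemma measurable_block_step : measurable_fun setT block_step.
Proof. exact: measurable_comp_block_of (fun j => a (block_label j) / N). Qed.

Lemma block_step_bound x : `|block_step x| <= S / N.
Proof.
by rewrite /block_step normrM normfV (gtr0_norm N0) ler_pM2r ?invr_gt0.
Qed.

Lemma abs_primitive_block_step_ge j x : block_lo R j <= x < block_lo R j.+1 ->
  ((`|a (block_label j)| / N * (x - block_lo R j))%:E
    <= abs_primitive block_step x)%E.
Proof.
move=> /andP[jx xj]; set c := `|a (block_label j)| / N.
have sub : `[block_lo R j, x] `<=` `]0, x].
  move=> t /=; rewrite !in_itv /= => /andP[jt ->]; rewrite andbT.
  exact: lt_le_trans (lt_le_trans ltr01 (block_lo_ge1 R j)) jt.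
have := @ge0_subset_integral _ _ R (leb R) _ _
  (measurable_itv `[block_lo R j, x]) (measurable_itv `]0, x]) _
  (@measurable_abs_EFin _ _ measurable_block_step _) (fun t _ => normr_ge0 _) sub.
apply: le_trans.
rewrite (@eq_integral _ _ _ _ _ (cst c%:E)); last first.
  move=> t; rewrite inE /= in_itv /= => /andP[jt tx].
  have tj : block_lo R j <= t < block_lo R j.+1 by rewrite jt (le_lt_trans tx xj).
  by rewrite /block_step (block_ofE tj) normrM normfV (gtr0_norm N0).
have len : leb R `[block_lo R j, x] = (x - block_lo R j)%:E.
  rewrite lebesgue_measure_itv /= lte_fin.
  case: ltP => [_|xj']; first by rewrite EFinB.
  by rewrite (@le_anti _ _ x (block_lo R j)) ?jx ?xj' // subrr.
rewrite integral_cst /=; last exact: measurable_itv.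
set m := (X in (_ * X)%E); have -> : m = (x - block_lo R j)%:E by rewrite -len.
by rewrite -EFinM.
Qed.

Lemma cesaro_block_step_ge j x (m : nat) :
  block_lo R j <= x < block_lo R j.+1 -> m.+1%:R * block_lo R j <= x ->
  `|a (block_label j)| / N * (1 - m.+1%:R^-1) <= Defs.cesaro block_step x.
Proof.
move=> jx mx; set c := `|a (block_label j)| / N.
have c0 : 0 <= c by rewrite divr_ge0 // ltW.
have j0 := lt_le_trans ltr01 (block_lo_ge1 R j).
have x0 : 0 < x by apply: lt_le_trans mx; rewrite mulr_gt0.
have := abs_primitive_block_step_ge jx.
rewrite -(fineK (abs_primitive_fin_num measurable_block_step block_step_bound x)).
have xV : 0 <= x^-1 by rewrite invr_ge0 ltW.
rewrite lee_fin /Defs.cesaro => /(ler_wpM2l xV) /(le_trans _); apply.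
rewrite -/c mulrCA [x^-1 * _]mulrBr mulVf ?gt_eqF // ler_wpM2l // lerD2l lerN2.
by rewrite mulrC ler_pdivrMr // mulrC ler_pdivlMr ?ltr0Sn // mulrC.
Qed.

End block_step.

Lemma normr_indic_le1 (R : realType) (A : set R) x : `|(\1_A x : R)| <= 1.
Proof. by rewrite indicE; case: (x \in A); rewrite ?normr1 ?normr0. Qed.

Section ri_space_facts.
Variables (R : realType) (X : set (R -> R)) (nX : (R -> R) -> R).
Hypotheses (riX : ri_space X nX) (LX : Linfty_embeds X).

Lemma Linfty_embeds_cst (r : R) : X (fun _ => r).
Proof.
by apply: LX; [exact: measurable_cst | exists `|r|; apply: aeW].
Qed.

Lemma Linfty_embeds_indic (A : set R) : measurable A -> X (\1_A).
Proof.
move=> mA; apply: LX; first exact: measurable_indic.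
by exists 1; apply: aeW => x _; exact: normr_indic_le1.
Qed.

Lemma nX_cst (r : R) : nX (fun _ => r) = `|r| * nX (fun _ => 1).
Proof.
have [[_ [_ [_ [_ [_ [_ [nXZ _]]]]]]] _ _ _] := riX.
rewrite -nXZ; last exact: Linfty_embeds_cst.
by congr nX; apply: funext => x; rewrite mulr1.
Qed.

Lemma nX_cst1_gt0 : 0 < nX (fun _ => 1).
Proof.
have [[_ [_ [_ [_ [nX_ge0 [nX_eq0 _]]]]]] _ _ _] := riX.
rewrite lt_def nX_ge0 ?andbT; last exact: Linfty_embeds_cst.
apply/eqP.
move=> /(proj1 (nX_eq0 _ (Linfty_embeds_cst 1))) [B [mB B0 sub]].
have sub01 : `]0, 1[ `<=` B.
  move=> t t01; apply: sub => /= t10.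
  suff: (1 : R) = 0 by move/eqP; rewrite oner_eq0.
  by apply: t10; move: t01; rewrite /Dom /= !in_itv /= => /andP[-> _].
have : (leb R `]0%R, 1%R[ <= leb R B)%E.
  by apply: le_measure => //; rewrite inE //; exact: measurable_itv.
rewrite B0 lebesgue_measure_itv /= lte_fin ltr01 sube0 lee_fin.
by rewrite leNgt ltr01.
Qed.

Lemma distr_fun_indic (A : set R) (l : R) : A `<=` Dom R -> 0 < l ->
  distr_fun (\1_A) l = if l < 1 then leb R A else 0%E.
Proof.
move=> AD l0; rewrite /distr_fun.
have -> : [set x | Dom R x /\ l < `|(\1_A x : R)|] = if l < 1 then A else set0.
  apply/seteqP; split => x /=; rewrite indicE.
  - case: (boolP (x \in A)) => [/set_mem Ax|_] [_]; rewrite ?normr1 ?normr0.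
      by move=> ->.
    by move=> /(lt_trans l0); rewrite ltxx.
  - by case: ifP => // l1 Ax; rewrite mem_set // normr1; split; first exact: AD.
by case: ifP => // _; exact: measure0.
Qed.

Lemma nX_indic_eq (A B : set R) : measurable A -> measurable B ->
  A `<=` Dom R -> B `<=` Dom R -> leb R A = leb R B -> nX (\1_A) = nX (\1_B).
Proof.
move=> mA mB AD BD AB; have [_ _ _ nX_equi] := riX.
have equiAB : equimeasurable (\1_A : R -> R) (\1_B).
  by move=> l l0; rewrite !distr_fun_indic // AB.
by have [_ ->] :=
  nX_equi _ _ (Linfty_embeds_indic mA) (measurable_indic mB) equiAB.
Qed.

Lemma nX_indic_translate (al r : R) : 0 < al -> 0 < r ->
  nX (\1_`[al, al + r[) = nX (\1_`]0, r[).
Proof.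
move=> al0 r0; apply: nX_indic_eq; try exact: measurable_itv.
- move=> x /=; rewrite /Dom /= !in_itv /= andbT => /andP[alx _].
  exact: lt_le_trans alx.
- by move=> x /=; rewrite /Dom /= !in_itv /= andbT => /andP[].
- rewrite !lebesgue_measure_itv /= !lte_fin ltrDl r0 -!EFinD.
  by rewrite addrAC subrr add0r oppr0 addr0.
Qed.

Lemma nX_indic_cvg : fatou_property X nX ->
  (fun n => nX (\1_`]0, n%:R[ : R -> R)) @ \oo --> nX (fun _ => 1).
Proof.
move=> fatouX; have [_ idealX _ _] := riX.
apply: (fatouX _ _ _ (measurable_cst _) _ _).2.
- by move=> n; exact: Linfty_embeds_indic.
- apply: aeW => x; rewrite /Dom /= in_itv /= andbT => x0; split.
  + move=> n; rewrite !indicE.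
    have sub : `]0, n%:R[ `<=` (`]0, n.+1%:R[ : set R).
      by apply: subset_itvl; rewrite bnd_simp ler_nat.
    rewrite ler0n ler_nat /=; case: (boolP (x \in _)) => [/set_mem/sub xn1|//].
    by rewrite mem_set.
  + apply: cvg_near_cst; exists (Num.truncn x).+1 => // n /= xn.
    rewrite indicE mem_set //= in_itv /= x0 /=.
    by apply: lt_le_trans (truncnS_gt x) _; rewrite ler_nat.
- exists (nX (fun _ => 1)) => n.
  apply: (idealX _ _ (measurable_indic _) (Linfty_embeds_cst 1) _).2 => //.
  by apply: aeW => x _; rewrite normr1; exact: normr_indic_le1.
Qed.

End ri_space_facts.

Section cesaro_embedding.
Variables (R : realType) (X : set (R -> R)) (nX : (R -> R) -> R).
Hypotheses (riX : ri_space X nX) (LX : Linfty_embeds X).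

Let N := nX (fun _ => 1).
Let N0 : 0 < N := nX_cst1_gt0 riX LX.

Lemma CX_block_step (a : nat -> R) (S : R) : (forall k, `|a k| <= S) ->
  CX X (block_step N a) /\ nCX nX (block_step N a) <= S.
Proof.
move=> aS; have [_ idealX _ _] := riX.
have S0 : 0 <= S := le_trans (normr_ge0 _) (aS 0%N).
have bounded := block_step_bound N0 aS.
have mT := measurable_block_step N a.
have Cbound : \forall x \ae leb R, Dom R x ->
    `|Defs.cesaro (block_step N a) x| <= `|S / N|.
  apply: aeW => x; rewrite /Dom /= in_itv /= andbT => x0.
  have /andP[C0 CS] := cesaro_ge0_le mT bounded x0.
  by rewrite ger0_norm // (le_trans CS (ler_norm _)).
have [XC nXC] :=
  idealX _ _ (measurable_cesaro mT bounded) (Linfty_embeds_cst LX _) Cbound.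
split; last first.
  apply: le_trans nXC _.
  by rewrite (nX_cst riX LX) ger0_norm ?divr_ge0 ?(ltW N0) // divfK ?gt_eqF.
split; first exact: measurable_funS mT.
by split; first exact: loc_int_at0_bounded mT bounded.
Qed.

(* A block [j >= 2n + 2] labelled [k] contains the interval
   [[(n+1) j!, (n+1) j! + n + 1[], on which [cesaro_block_step_ge] applies. *)
Lemma nCX_block_step_ge (a : nat -> R) (S : R) (k n : nat) :
  (forall k, `|a k| <= S) ->
  `|a k| / N * (1 - n.+1%:R^-1) * nX (\1_`]0, n.+1%:R[)
    <= nCX nX (block_step N a).
Proof.
move=> aS; have [[_ [_ [_ [_ [_ [_ [nXZ _]]]]]]] idealX _ _] := riX.
have [j nj <-] := block_label_recurrent k (n.+1 + n.+1).
set c := _ * (1 - _).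
have c0 : 0 <= c.
  by rewrite mulr_ge0 ?divr_ge0 ?(ltW N0) // subr_ge0 invf_le1 ?ler1n.
set al := n.+1%:R * block_lo R j.
have j0 : 0 < block_lo R j := lt_le_trans ltr01 (block_lo_ge1 R j).
have al0 : 0 < al by rewrite mulr_gt0.
have jal : block_lo R j <= al by rewrite ler_peMl ?ler1n // ltW.
have lower : \forall x \ae leb R, Dom R x ->
    `|c * \1_`[al, al + n.+1%:R[ x| <= `|Defs.cesaro (block_step N a) x|.
  apply: aeW => x _; rewrite indicE.
  case: (boolP (x \in _)) => [/set_mem|_]; last by rewrite mulr0 normr0.
  rewrite /= in_itv /= => /andP[alx xal].
  rewrite mulr1 ger0_norm // (le_trans _ (ler_norm _)) //.
  apply: (@cesaro_block_step_ge R N a S N0 aS j x n _ alx).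
  by rewrite (le_trans jal alx) (lt_le_trans xal (block_lo_room R nj)).
have mI : L0 R (fun x => c * \1_`[al, al + n.+1%:R[ x).
  apply: measurable_funM; first exact: measurable_cst.
  by apply: measurable_indic; exact: measurable_itv.
have [_] := idealX _ _ mI (CX_block_step aS).1.2.2 lower.
rewrite nXZ; last exact: (Linfty_embeds_indic LX (measurable_itv _)).
by rewrite (nX_indic_translate riX LX) ?ltr0Sn // ger0_norm.
Qed.

Lemma nCX_block_step (a : nat -> R) :
  fatou_property X nX -> linfty a -> nCX nX (block_step N a) = linfty_norm a.
Proof.
move=> fatouX [M aM].
have hub : has_ubound (range (fun n => `|a n|)) by exists M => _ [n _ <-].
have aS k : `|a k| <= linfty_norm a by apply: (ub_le_sup hub); exists k.
apply: le_anti; rewrite (CX_block_step aS).2 /=.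
apply: ge_sup; first by exists `|a 0%N|, 0%N.
move=> _ [k _ <-].
have lim : (fun n => `|a k| / N * (1 - n.+1%:R^-1) * nX (\1_`]0, n.+1%:R[))
    @ \oo --> `|a k| / N * (1 - 0) * N.
  apply: cvgM; last by have := nX_indic_cvg riX LX fatouX; rewrite -cvg_shiftS.
  apply: cvgM; first exact: cvg_cst.
  by apply: cvgB; [exact: cvg_cst | exact: cvg_harmonic].
rewrite subr0 mulr1 divfK ?gt_eqF // in lim.
apply: ler_cvg_to lim (cvg_cst _) _.
by apply: nearW => n; exact: nCX_block_step_ge aS.
Qed.

End cesaro_embedding.

Theorem proposition4p4 (R : realType) (X : set (R -> R))
    (nX : (R -> R) -> R) :
  ri_space X nX ->
  fatou_property X nX ->
  Linfty_embeds X ->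
  cesaro_bounded X nX ->
  (forall f (A : set R), X f -> measurable A -> A `<=` Dom R ->
     (leb R A < +oo)%E ->
     order_continuous X nX (fun x => f x * (\1_A x : R))) ->
  lattice_isometric_copy_linfty (CX X) (nCX nX).
Proof.
move=> riX fatouX LX _ _.
have N0 := nX_cst1_gt0 riX LX.
exists (block_step (nX (fun _ => 1))); split.
- by move=> a [S aS]; exact: (CX_block_step riX LX aS).1.
- by move=> a /(nCX_block_step riX LX fatouX).
- by move=> k a b _ _; apply: aeW => x _; rewrite /block_step mulrDl mulrA.
- move=> a b _ _; apply: aeW => x _.
  by rewrite /block_step maxr_pMl // invr_ge0 ltW.
Qed.
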